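(* Let $\alpha(\cdot,t)$ be a solution of the length-constrained elastic flow $$\partial_t\alpha=\Big(k_{ss}+\tfrac12k^3-\lambda(t)k\Big)\nu,\qquad \lambda(t)=\frac{-\int_\alpha k_s^2\,ds+\frac12\int_\alpha k^4\,ds}{\int_\alpha k^2\,ds},$$ with generalised Neumann boundary conditions in a cone with $\omega=\frac{\theta_1-\theta_2}{2\pi}$, and let $L_0$ be the length of the initial curve. Then, while the solution exists, $$-\frac{L_0\int_\alpha k_s^2\,ds}{(2\pi\omega)^2}\le\lambda(t)\le\frac{2L_0}{\pi}\int_\alpha k_s^2\,ds+\bar k^2.$$
   Context: The cone: fix $0\le\theta_2<\theta_1<2\pi$; its boundary consists of the open rays $\bar\gamma_i=\{(\rho\cos\theta_i,\rho\sin\theta_i):\rho>0\}$, $i=1,2$. Generalised Neumann boundary conditions: for each $t$ the curve's interior lies in the open cone between the rays, $\alpha(-1,t)\in\bar\gamma_1$, $\alpha(1,t)\in\bar\gamma_2$, the curve meets each ray perpendicularly at its endpoint, and $k_s(\pm1,t)=0$. Here $s$ is arc length, $\nu$ the outer unit normal, $k=-\langle\alpha_{ss},\nu\rangle$ the scalar curvature (so $\int_\alpha k\,ds=2\pi\omega$), $L$ the length, and $\bar k=\frac1L\int_\alpha k\,ds$. Integrals are over $\alpha(\cdot,t)$ with respect to arc length. *)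

From Stdlib Require Import Reals.
From Coquelicot Require Import Coquelicot.
Open Scope R_scope.

(** A time-dependent plane curve is a pair of scalar functions
    x, y : R -> R -> R, (u,t) |-> x(u,t), y(u,t), with parameter u in [-1,1]. *)

Definition pd (n m : nat) (f : R -> R -> R) : R -> R -> R :=
  fun u t => Derive_n (fun t' => Derive_n (fun u' => f u' t') n u) m t.

Definition smooth_on_rect (f : R -> R -> R) (a b c d : R) : Prop :=
  forall (n m : nat) (u t : R), a < u < b -> c < t < d ->
    ex_derive_n (fun u' => f u' t) n u /\
    ex_derive_n (fun t' => Derive_n (fun u' => f u' t') n u) m t /\
    continuous (fun p : R * R => pd n m f (fst p) (snd p)) (u, t).

Definition speed (x y : R -> R -> R) : R -> R -> R :=
  fun u t => sqrt (pd 1 0 x u t ^ 2 + pd 1 0 y u t ^ 2).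

Definition Ds (x y : R -> R -> R) (g : R -> R -> R) : R -> R -> R :=
  fun u t => Derive (fun u' => g u' t) u / speed x y u t.

(** Unit normal nu = rotation of the unit tangent tau = alpha_s by +pi/2,
    nu = (-y_s, x_s); with the orientation from the ray theta_1 to the ray
    theta_2 this is the outer normal (a circular arc about the origin has
    curvature +1/r). *)
Definition nu1 (x y : R -> R -> R) : R -> R -> R := fun u t => - Ds x y y u t.
Definition nu2 (x y : R -> R -> R) : R -> R -> R := fun u t => Ds x y x u t.

Definition curv (x y : R -> R -> R) : R -> R -> R :=
  fun u t => - (Ds x y (Ds x y x) u t * nu1 x y u t
                + Ds x y (Ds x y y) u t * nu2 x y u t).

Definition curv_s (x y : R -> R -> R) : R -> R -> R := Ds x y (curv x y).
Definition curv_ss (x y : R -> R -> R) : R -> R -> R := Ds x y (curv_s x y).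

Definition arcint (x y : R -> R -> R) (g : R -> R -> R) (t : R) : R :=
  RInt (fun u => g u t * speed x y u t) (-1) 1.

Definition len (x y : R -> R -> R) (t : R) : R :=
  RInt (fun u => speed x y u t) (-1) 1.

Definition kbar (x y : R -> R -> R) (t : R) : R :=
  arcint x y (curv x y) t / len x y t.

Definition lam (x y : R -> R -> R) (t : R) : R :=
  (- arcint x y (fun u t => curv_s x y u t ^ 2) t
   + / 2 * arcint x y (fun u t => curv x y u t ^ 4) t)
  / arcint x y (fun u t => curv x y u t ^ 2) t.

Definition in_open_cone (th1 th2 px py : R) : Prop :=
  exists rho th, 0 < rho /\ th2 < th < th1 /\ px = rho * cos th /\ py = rho * sin th.

Definition on_ray (th px py : R) : Prop :=
  exists rho, 0 < rho /\ px = rho * cos th /\ py = rho * sin th.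

Definition gen_neumann (th1 th2 : R) (x y : R -> R -> R) (t : R) : Prop :=
  (forall u, -1 < u < 1 -> in_open_cone th1 th2 (x u t) (y u t)) /\
  on_ray th1 (x (-1) t) (y (-1) t) /\
  on_ray th2 (x 1 t) (y 1 t) /\
  pd 1 0 x (-1) t * cos th1 + pd 1 0 y (-1) t * sin th1 = 0 /\
  pd 1 0 x 1 t * cos th2 + pd 1 0 y 1 t * sin th2 = 0 /\
  curv_s x y (-1) t = 0 /\
  curv_s x y 1 t = 0.

(** (x,y) is a (smooth, regular) solution on [0,T) of the length-constrained
    elastic flow  d_t alpha = (k_ss + k^3/2 - lambda k) nu  with generalised
    Neumann boundary conditions in the cone, whose winding is
    int k ds = 2 pi omega = th1 - th2. *)
Definition elastic_flow_solution (th1 th2 T : R) (x y : R -> R -> R) : Prop :=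
  (exists eps, 0 < eps /\
     smooth_on_rect x (-1 - eps) (1 + eps) (- eps) T /\
     smooth_on_rect y (-1 - eps) (1 + eps) (- eps) T) /\
  (forall u t, -1 <= u <= 1 -> 0 <= t < T -> 0 < speed x y u t) /\
  (forall u t, -1 <= u <= 1 -> 0 <= t < T ->
     let V := curv_ss x y u t + / 2 * curv x y u t ^ 3
              - lam x y t * curv x y u t in
     pd 0 1 x u t = V * nu1 x y u t /\ pd 0 1 y u t = V * nu2 x y u t) /\
  (forall t, 0 <= t < T -> gen_neumann th1 th2 x y t) /\
  (forall t, 0 <= t < T -> arcint x y (curv x y) t = th1 - th2).

(* The multiplier [lam] is exactly the one that keeps the length constant.  Along the flow
   the speed evolves by d/dt |alpha_u| = V k |alpha_u|, where V = k_ss + k^3/2 - lam k is the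
   normal velocity, so L' = int V k ds; integrating k k_ss by parts (k_s vanishes at both ends)
   gives L' = - int k_s^2 + 1/2 int k^4 - lam int k^2 = 0, hence L = L_0.

   Lower bound: lam >= - int k_s^2 / int k^2, and Cauchy-Schwarz gives
   (2 pi omega)^2 = (int k ds)^2 <= L int k^2.

   Upper bound: with sigma the arc length from the first endpoint,
   L k(u) - int k ds = int_{sigma < sigma(u)} k_s sigma ds
                       + int_{sigma > sigma(u)} k_s (sigma - L) ds,
   and Cauchy-Schwarz on both pieces gives (k - kbar)^2 <= L/3 int k_s^2.  Hence
   k^2 <= 2 B with B = L/3 int k_s^2 + kbar^2, so int k^4 <= 2 B int k^2 and lam <= B;
   finally 1/3 <= 2/pi. *)

From Stdlib Require Import Reals Lra Lia.
From Coquelicot Require Import Coquelicot.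
Open Scope R_scope.

(** * Smooth functions on an open interval *)

Lemma locally_open_interval lo hi u : lo < u < hi -> locally u (fun v => lo < v < hi).
Proof. intros [H1 H2]. now apply (locally_interval _ u (Finite lo) (Finite hi)). Qed.

Lemma open_interval_of_Rmin_Rmax lo hi a b z :
  lo < a < hi -> lo < b < hi -> Rmin a b <= z <= Rmax a b -> lo < z < hi.
Proof.
  intros Ha Hb [H1 H2].
  assert (lo < Rmin a b) by (apply Rmin_glb_lt; lra).
  assert (Rmax a b < hi) by (apply Rmax_lub_lt; lra). lra.
Qed.

Fixpoint Cn (lo hi : R) (n : nat) (f : R -> R) : Prop :=
  match n with
  | O => True
  | S m => (forall u, lo < u < hi -> ex_derive f u) /\ Cn lo hi m (Derive f)
  end.

Definition Cinf (lo hi : R) (f : R -> R) : Prop := forall n, Cn lo hi n f.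

Section SmoothFunctions.
Variables lo hi : R.

Lemma Cn_ext n : forall f g, (forall u, lo < u < hi -> f u = g u) ->
  Cn lo hi n f -> Cn lo hi n g.
Proof.
  induction n as [|n IH]; simpl; auto. intros f g E [F1 F2].
  assert (Loc : forall u, lo < u < hi -> locally u (fun v => f v = g v)).
  { intros u Hu. apply (filter_imp (fun v => lo < v < hi)); auto.
    now apply locally_open_interval. }
  split.
  - intros u Hu. apply ex_derive_ext_loc with f; auto.
  - apply IH with (Derive f); auto. intros u Hu. now apply Derive_ext_loc, Loc.
Qed.

Lemma Cn_S n f : Cn lo hi (S n) f -> Cn lo hi n f.
Proof. revert f; induction n as [|n IH]; simpl; auto. intros f [F1 F2]; auto. Qed.

Lemma Cn_const n c : Cn lo hi n (fun _ => c).
Proof.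
  revert c; induction n as [|n IH]; simpl; auto. intros c. split.
  - intros; apply ex_derive_const.
  - apply Cn_ext with (fun _ => 0); auto. intros; now rewrite Derive_const.
Qed.

Lemma Cn_plus n : forall f g, Cn lo hi n f -> Cn lo hi n g ->
  Cn lo hi n (fun u => f u + g u).
Proof.
  induction n as [|n IH]; simpl; auto. intros f g [F1 F2] [G1 G2]. split.
  - intros u Hu. now apply (ex_derive_plus f g u); auto.
  - apply Cn_ext with (fun u => Derive f u + Derive g u); auto.
    intros u Hu. now rewrite Derive_plus; auto.
Qed.

Lemma Cn_mult n : forall f g, Cn lo hi n f -> Cn lo hi n g ->
  Cn lo hi n (fun u => f u * g u).
Proof.
  induction n as [|n IH]; simpl; auto. intros f g [F1 F2] [G1 G2]. split.
  - intros u Hu. now apply ex_derive_mult; auto.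
  - apply Cn_ext with (fun u => Derive f u * g u + f u * Derive g u).
    + intros u Hu. now rewrite Derive_mult; auto.
    + apply Cn_plus; apply IH; auto; apply Cn_S; simpl; auto.
Qed.

Lemma Cn_inv n : forall f, Cn lo hi n f -> (forall u, lo < u < hi -> f u <> 0) ->
  Cn lo hi n (fun u => / f u).
Proof.
  induction n as [|n IH]; simpl; auto. intros f [F1 F2] Hnz. split.
  - intros u Hu. now apply ex_derive_inv; auto.
  - apply Cn_ext with (fun u => (-1 * Derive f u) * (/ f u * / f u)).
    + intros u Hu. rewrite Derive_inv; auto. specialize (Hnz u Hu). now field.
    + apply Cn_mult; [apply Cn_mult; auto; apply Cn_const|].
      apply Cn_mult; apply IH; auto; apply Cn_S; simpl; auto.
Qed.

Lemma Cn_sqrt n : forall f, Cn lo hi n f -> (forall u, lo < u < hi -> 0 < f u) ->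
  Cn lo hi n (fun u => sqrt (f u)).
Proof.
  induction n as [|n IH]; simpl; auto. intros f [F1 F2] Hpos.
  assert (Dsqrt : forall u, lo < u < hi ->
    is_derive (fun v => sqrt (f v)) u (Derive f u * / 2 * / sqrt (f u))).
  { intros u Hu. assert (Hs := sqrt_lt_R0 _ (Hpos u Hu)).
    replace (Derive f u * / 2 * / sqrt (f u)) with (Derive f u / (2 * sqrt (f u)))
      by (field; lra).
    now apply is_derive_sqrt; [apply Derive_correct, F1|apply Hpos]. }
  split.
  - intros u Hu. eexists. now apply Dsqrt.
  - apply Cn_ext with (fun u => Derive f u * / 2 * / sqrt (f u)).
    + intros u Hu. symmetry. now apply is_derive_unique, Dsqrt.
    + apply Cn_mult; [apply Cn_mult; auto; apply Cn_const|].
      apply Cn_inv; [apply IH; auto; apply Cn_S; simpl; auto|].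
      intros u Hu. apply Rgt_not_eq, sqrt_lt_R0; auto.
Qed.

Lemma Cn_of_ex_derive_n n : forall f,
  (forall m u, lo < u < hi -> ex_derive_n f m u) -> Cn lo hi n f.
Proof.
  induction n as [|n IH]; simpl; auto. intros f H. split.
  - intros u Hu. exact (H 1%nat u Hu).
  - apply IH. intros m u Hu. destruct m as [|m]; simpl; auto.
    apply ex_derive_ext with (Derive_n f (S m)).
    + intros v. replace (S m) with (m + 1)%nat by lia. now rewrite <- (Derive_n_comp f m 1).
    + exact (H (S (S m)) u Hu).
Qed.

Lemma Cinf_ext f g : (forall u, lo < u < hi -> f u = g u) -> Cinf lo hi f -> Cinf lo hi g.
Proof. intros E F n. now apply Cn_ext with f. Qed.

Lemma Cinf_const c : Cinf lo hi (fun _ => c).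
Proof. intros n; apply Cn_const. Qed.

Lemma Cinf_plus f g : Cinf lo hi f -> Cinf lo hi g -> Cinf lo hi (fun u => f u + g u).
Proof. intros F G n; now apply Cn_plus. Qed.

Lemma Cinf_mult f g : Cinf lo hi f -> Cinf lo hi g -> Cinf lo hi (fun u => f u * g u).
Proof. intros F G n; now apply Cn_mult. Qed.

Lemma Cinf_opp f : Cinf lo hi f -> Cinf lo hi (fun u => - f u).
Proof.
  intros F. apply Cinf_ext with (fun u => -1 * f u); [intros; ring|].
  apply Cinf_mult; auto. apply Cinf_const.
Qed.

Lemma Cinf_pow f k : Cinf lo hi f -> Cinf lo hi (fun u => f u ^ k).
Proof.
  intros F. induction k as [|k IH]; simpl; [apply Cinf_const | now apply Cinf_mult].
Qed.

Lemma Cinf_div f g : Cinf lo hi f -> Cinf lo hi g -> (forall u, lo < u < hi -> g u <> 0) ->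
  Cinf lo hi (fun u => f u / g u).
Proof. intros F G H n. apply Cn_mult; auto. now apply Cn_inv. Qed.

Lemma Cinf_sqrt f : Cinf lo hi f -> (forall u, lo < u < hi -> 0 < f u) ->
  Cinf lo hi (fun u => sqrt (f u)).
Proof. intros F H n; now apply Cn_sqrt. Qed.

Lemma Cinf_Derive f : Cinf lo hi f -> Cinf lo hi (Derive f).
Proof. intros F n. exact (proj2 (F (S n))). Qed.

Lemma Cinf_ex_derive f u : Cinf lo hi f -> lo < u < hi -> ex_derive f u.
Proof. intros F Hu. exact (proj1 (F 1%nat) u Hu). Qed.

Lemma Cinf_is_derive f u : Cinf lo hi f -> lo < u < hi -> is_derive f u (Derive f u).
Proof. intros F Hu. now apply Derive_correct, Cinf_ex_derive. Qed.

Lemma Cinf_continuous f u : Cinf lo hi f -> lo < u < hi -> continuous f u.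
Proof.
  intros F Hu. apply (ex_derive_continuous (K := R_AbsRing) (V := R_NormedModule)).
  now apply Cinf_ex_derive.
Qed.

Lemma Cinf_of_ex_derive_n f : (forall m u, lo < u < hi -> ex_derive_n f m u) -> Cinf lo hi f.
Proof. intros H n. now apply Cn_of_ex_derive_n. Qed.

Lemma Cinf_ex_RInt f a b : Cinf lo hi f -> lo < a < hi -> lo < b < hi -> ex_RInt f a b.
Proof.
  intros F Ha Hb. apply (ex_RInt_continuous (V := R_CompleteNormedModule)).
  intros z Hz. apply (Cinf_continuous _ _ F). now apply (open_interval_of_Rmin_Rmax lo hi a b).
Qed.
End SmoothFunctions.

Lemma Cinf_restrict lo hi lo' hi' f : lo <= lo' -> hi' <= hi -> Cinf lo hi f -> Cinf lo' hi' f.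
Proof.
  intros Hl Hh F n. revert f F. induction n as [|n IH]; simpl; auto. intros f F. split.
  - intros u Hu. apply (Cinf_ex_derive lo hi); auto; lra.
  - now apply IH, Cinf_Derive.
Qed.

(* Coquelicot states these for arbitrary normed modules; the instances at [R] below apply
   by plain unification. *)
Lemma continuous_Rplus (f g : R -> R) x :
  continuous f x -> continuous g x -> continuous (fun y => f y + g y) x.
Proof. apply (continuous_plus f g x). Qed.

Lemma continuous_Rmult (f g : R -> R) x :
  continuous f x -> continuous g x -> continuous (fun y => f y * g y) x.
Proof. apply (continuous_mult f g x). Qed.

Lemma continuous_Rminus (f g : R -> R) x :
  continuous f x -> continuous g x -> continuous (fun y => f y - g y) x.
Proof. apply (continuous_minus f g x). Qed.

Lemma continuous_Rconst (c x : R) : continuous (fun _ : R => c) x.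
Proof. apply continuous_const. Qed.

Lemma continuous_Rpow (f : R -> R) n x : continuous f x -> continuous (fun y => f y ^ n) x.
Proof.
  intros H; induction n as [|n IH]; simpl; [apply continuous_Rconst | now apply continuous_Rmult].
Qed.

Ltac Rcontinuity :=
  repeat match goal with
  | |- continuous (fun _ => _) _ => apply continuous_Rconst
  | |- continuous (fun y => @?f y ^ ?n) _ => apply (continuous_Rpow f n)
  | |- continuous (fun y => @?f y - @?g y) _ => apply (continuous_Rminus f g)
  | |- continuous (fun y => @?f y + @?g y) _ => apply (continuous_Rplus f g)
  | |- continuous (fun y => @?f y * @?g y) _ => apply (continuous_Rmult f g)
  end.

Lemma ex_RInt_of_continuous (f : R -> R) a b :
  (forall z, Rmin a b <= z <= Rmax a b -> continuous f z) -> ex_RInt f a b.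
Proof. apply (ex_RInt_continuous (V := R_CompleteNormedModule)). Qed.

Lemma ex_RInt_of_continuous_on lo hi (f : R -> R) a b :
  (forall z, lo < z < hi -> continuous f z) -> lo < a < hi -> lo < b < hi -> ex_RInt f a b.
Proof.
  intros C Ha Hb. apply ex_RInt_of_continuous. intros z Hz.
  now apply C, (open_interval_of_Rmin_Rmax lo hi a b).
Qed.

Lemma RInt_of_is_derive_on lo hi (f df : R -> R) a b :
  (forall z, lo < z < hi -> is_derive f z (df z)) ->
  (forall z, lo < z < hi -> continuous df z) ->
  lo < a < hi -> lo < b < hi -> RInt df a b = f b - f a.
Proof.
  intros D C Ha Hb. apply is_RInt_unique, (is_RInt_derive f df); intros z Hz;
    apply D || apply C; now apply (open_interval_of_Rmin_Rmax lo hi a b).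
Qed.

Lemma is_derive_Rmult (f g : R -> R) x df dg : is_derive f x df -> is_derive g x dg ->
  is_derive (fun y => f y * g y) x (df * g x + f x * dg).
Proof. intros. apply (is_derive_mult f g); auto. intros; apply Rmult_comm. Qed.

Lemma is_derive_Rplus (f g : R -> R) x df dg : is_derive f x df -> is_derive g x dg ->
  is_derive (fun y => f y + g y) x (df + dg).
Proof. apply (is_derive_plus f g). Qed.

Lemma is_derive_Rconst (c x : R) : is_derive (fun _ : R => c) x 0.
Proof. apply (is_derive_const (K := R_AbsRing) (V := R_NormedModule)). Qed.

Lemma is_derive_Rminus_const (f : R -> R) x df c : is_derive f x df ->
  is_derive (fun y => f y - c) x df.
Proof.
  intros H. replace df with (df - 0) by ring.
  apply (is_derive_minus f (fun _ => c)); auto. apply is_derive_Rconst.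
Qed.

Lemma RInt_Rext (f g : R -> R) a b :
  (forall z, Rmin a b < z < Rmax a b -> f z = g z) -> RInt f a b = RInt g a b.
Proof. apply RInt_ext. Qed.

Lemma RInt_Rplus (f g : R -> R) a b : ex_RInt f a b -> ex_RInt g a b ->
  RInt (fun z => f z + g z) a b = RInt f a b + RInt g a b.
Proof. apply (RInt_plus f g). Qed.

Lemma RInt_Rscal (f : R -> R) a b c : ex_RInt f a b ->
  RInt (fun z => c * f z) a b = c * RInt f a b.
Proof. apply (RInt_scal f). Qed.

Lemma RInt_RChasles (f : R -> R) a b c : ex_RInt f a b -> ex_RInt f b c ->
  RInt f a b + RInt f b c = RInt f a c.
Proof. apply (RInt_Chasles f). Qed.

Lemma RInt_Rminus (f g : R -> R) a b : ex_RInt f a b -> ex_RInt g a b ->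
  RInt (fun z => f z - g z) a b = RInt f a b - RInt g a b.
Proof. apply (RInt_minus f g). Qed.

Lemma locally_pos_of_continuous (f : R -> R) c : continuous f c -> 0 < f c ->
  locally c (fun v => 0 < f v).
Proof. intros H Hc. exact (H _ (open_gt 0 (f c) Hc)). Qed.

(* [RInt] equalities are stated in the carrier of [R_CompleteNormedModule]; [ring] and
   [field] need them in [R]. *)
Ltac R_eq := match goal with |- @eq _ ?a ?b => change (@eq R a b) end.

(** * Integral inequalities *)

Lemma sqr_le_of_quadratic_nonneg F H G : 0 <= G ->
  (forall c, 0 <= F - 2 * c * H + c ^ 2 * G) -> H ^ 2 <= F * G.
Proof.
  intros HG Hc. destruct (Rle_lt_or_eq_dec 0 G HG) as [Gpos|G0].
  - specialize (Hc (H / G)).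
    replace (F - 2 * (H / G) * H + (H / G) ^ 2 * G) with ((F * G - H ^ 2) / G) in Hc
      by (field; lra).
    apply Rmult_le_compat_r with (r := G) in Hc; [|lra].
    replace ((F * G - H ^ 2) / G * G) with (F * G - H ^ 2) in Hc by (field; lra). lra.
  - subst G. destruct (Req_dec H 0) as [H0|Hn].
    + subst H. specialize (Hc 0). lra.
    + specialize (Hc ((F + 1) / (2 * H))).
      replace (F - 2 * ((F + 1) / (2 * H)) * H + ((F + 1) / (2 * H)) ^ 2 * 0) with (-1) in Hc
        by (field; auto).
      lra.
Qed.

Lemma RInt_cauchy_schwarz (f g w : R -> R) a b : a <= b ->
  (forall z, a <= z <= b -> continuous f z) ->
  (forall z, a <= z <= b -> continuous g z) ->
  (forall z, a <= z <= b -> continuous w z) ->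
  (forall z, a < z < b -> 0 <= w z) ->
  RInt (fun z => f z * g z * w z) a b ^ 2 <=
    RInt (fun z => f z ^ 2 * w z) a b * RInt (fun z => g z ^ 2 * w z) a b.
Proof.
  intros Hab Cf Cg Cw Hw.
  assert (Ex : forall h : R -> R, (forall z, a <= z <= b -> continuous h z) -> ex_RInt h a b).
  { intros h Ch. apply ex_RInt_of_continuous. now rewrite Rmin_left, Rmax_right. }
  apply sqr_le_of_quadratic_nonneg.
  - apply RInt_ge_0; auto.
    + apply Ex. intros; Rcontinuity; auto.
    + intros z Hz. apply Rmult_le_pos; auto. apply pow2_ge_0.
  - intros c.
    assert (Expand : RInt (fun z => (f z - c * g z) ^ 2 * w z) a b =
      RInt (fun z => f z ^ 2 * w z) a b - 2 * c * RInt (fun z => f z * g z * w z) a b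
      + c ^ 2 * RInt (fun z => g z ^ 2 * w z) a b).
    { R_eq. rewrite (RInt_Rext _ (fun z => (f z ^ 2 * w z + (-2 * c) * (f z * g z * w z))
                                     + c ^ 2 * (g z ^ 2 * w z))) by (intros; ring).
      rewrite RInt_Rplus, RInt_Rplus, !RInt_Rscal; [ring|..];
        apply Ex; intros; Rcontinuity; auto. }
    rewrite <- Expand. apply RInt_ge_0; auto.
    + apply Ex. intros; Rcontinuity; auto.
    + intros z Hz. apply Rmult_le_pos; auto. apply pow2_ge_0.
Qed.

Lemma sqr_add_le_mul_add x1 x2 A1 A2 B1 B2 : 0 <= A1 -> 0 <= A2 -> 0 <= B1 -> 0 <= B2 ->
  x1 ^ 2 <= A1 * B1 -> x2 ^ 2 <= A2 * B2 -> (x1 + x2) ^ 2 <= (A1 + A2) * (B1 + B2).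
Proof.
  intros HA1 HA2 HB1 HB2 H1 H2.
  (* AM-GM: 2 x1 x2 <= 2 sqrt(A1 B2 A2 B1) <= A1 B2 + A2 B1 *)
  assert (Hq : (x1 * x2) ^ 2 <= (A1 * B2) * (A2 * B1)).
  { replace ((x1 * x2) ^ 2) with (x1 ^ 2 * x2 ^ 2) by ring.
    replace (A1 * B2 * (A2 * B1)) with ((A1 * B1) * (A2 * B2)) by ring.
    apply Rmult_le_compat; auto; apply pow2_ge_0. }
  assert (Hp : 2 * (x1 * x2) <= A1 * B2 + A2 * B1).
  { assert (0 <= A1 * B2) by (apply Rmult_le_pos; auto).
    assert (0 <= A2 * B1) by (apply Rmult_le_pos; auto).
    generalize dependent (x1 * x2). generalize dependent (A1 * B2).
    generalize dependent (A2 * B1). intros Q HQ P HP m Hm.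
    destruct (Rle_or_lt (2 * m) (P + Q)) as [Hle|Hlt]; auto.
    assert ((P + Q) * (P + Q) < (2 * m) * (2 * m)) by (apply Rmult_le_0_lt_compat; lra).
    assert (0 <= (P - Q) ^ 2) by apply pow2_ge_0. nra. }
  replace ((x1 + x2) ^ 2) with (x1 ^ 2 + x2 ^ 2 + 2 * (x1 * x2)) by ring.
  replace ((A1 + A2) * (B1 + B2)) with (A1 * B1 + A2 * B2 + (A1 * B2 + A2 * B1)) by ring.
  lra.
Qed.

(* Read [s] as a speed and [S] as the arc length from [a]: then [ks] is the derivative of [k]
   with respect to arc length. *)
Section PointwiseBound.
Variables (k ks s : R -> R) (lo hi a : R).
Hypothesis Ha : lo < a < hi.
Hypothesis Cks : forall v, lo < v < hi -> continuous ks v.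
Hypothesis Cs : forall v, lo < v < hi -> continuous s v.
Hypothesis Dk : forall v, lo < v < hi -> is_derive k v (ks v * s v).
Hypothesis Snn : forall v, lo < v < hi -> 0 <= s v.

Local Notation S := (RInt s a).

Lemma is_derive_primitive v : lo < v < hi -> is_derive S v (s v).
Proof.
  intros Hv. apply (is_derive_RInt s S a v); auto.
  apply (filter_imp (fun b => lo < b < hi)); [|now apply locally_open_interval].
  intros b Hb. apply (RInt_correct (V := R_CompleteNormedModule)).
  now apply (ex_RInt_of_continuous_on lo hi).
Qed.

Let continuous_S v : lo < v < hi -> continuous S v.
Proof.
  intros Hv. apply (ex_derive_continuous (K := R_AbsRing) (V := R_NormedModule)).
  eexists. now apply is_derive_primitive.
Qed.

Let continuous_k v : lo < v < hi -> continuous k v.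
Proof.
  intros Hv. apply (ex_derive_continuous (K := R_AbsRing) (V := R_NormedModule)).
  eexists. now apply Dk.
Qed.

Let Ex (f : R -> R) p q : (forall z, lo < z < hi -> continuous f z) ->
  lo < p < hi -> lo < q < hi -> ex_RInt f p q.
Proof. apply ex_RInt_of_continuous_on. Qed.

Lemma RInt_by_parts_primitive c p q : lo < p < hi -> lo < q < hi ->
  RInt (fun v => ks v * (S v - c) * s v + k v * s v) p q = k q * (S q - c) - k p * (S p - c).
Proof.
  apply (RInt_of_is_derive_on lo hi (fun v => k v * (S v - c))).
  - intros z Hz.
    replace (ks z * (S z - c) * s z + k z * s z) with (ks z * s z * (S z - c) + k z * s z)
      by ring.
    apply (is_derive_Rmult k (fun v => S v - c)); auto.
    now apply is_derive_Rminus_const, is_derive_primitive.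
  - intros z Hz. Rcontinuity; auto using continuous_k.
Qed.

Lemma RInt_sqr_primitive c p q : lo < p < hi -> lo < q < hi ->
  RInt (fun v => (S v - c) ^ 2 * s v) p q = ((S q - c) ^ 3 - (S p - c) ^ 3) / 3.
Proof.
  intros Hp Hq.
  rewrite (RInt_of_is_derive_on lo hi (fun v => / 3 * (S v - c) ^ 3)); auto.
  - R_eq; field.
  - intros z Hz.
    replace ((S z - c) ^ 2 * s z) with (/ 3 * (INR 3 * s z * (S z - c) ^ 2)) by (simpl; field).
    apply (is_derive_scal (fun v => (S v - c) ^ 3)).
    apply (is_derive_pow (fun v => S v - c) 3).
    now apply is_derive_Rminus_const, is_derive_primitive.
  - intros z Hz. Rcontinuity; auto.
Qed.

Lemma RInt_primitive_cauchy_schwarz c p q : lo < p < hi -> lo < q < hi -> p <= q ->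
  RInt (fun v => ks v * (S v - c) * s v) p q ^ 2 <=
    RInt (fun v => ks v ^ 2 * s v) p q * (((S q - c) ^ 3 - (S p - c) ^ 3) / 3).
Proof.
  intros Hp Hq Hpq. rewrite <- RInt_sqr_primitive by auto.
  apply RInt_cauchy_schwarz; auto; intros z Hz.
  - apply Cks; lra.
  - Rcontinuity; apply continuous_S; lra.
  - apply Cs; lra.
  - apply Snn; lra.
Qed.

Lemma primitive_base : S a = 0.
Proof. apply (RInt_point (V := R_CompleteNormedModule)). Qed.

Lemma primitive_bounds b u : lo < b < hi -> a <= u <= b -> 0 <= S u <= S b.
Proof.
  intros Hb Hu.
  assert (Nonneg : forall p q, a <= p <= q -> q <= b -> 0 <= RInt s p q).
  { intros p q Hpq Hqb. apply RInt_ge_0; [lra | apply Ex; auto; lra |].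
    intros; apply Snn; lra. }
  split; [now apply Nonneg|].
  rewrite <- (RInt_RChasles s a u b) by (apply Ex; auto; lra).
  assert (0 <= RInt s u b) by (apply Nonneg; lra). lra.
Qed.

(* Integrate k' (S - c) by parts on [a, u] with c = 0 and on [u, b] with c = S b. *)
Lemma mean_deviation_by_parts b u : lo < b < hi -> lo < u < hi ->
  S b * k u - RInt (fun v => k v * s v) a b =
    RInt (fun v => ks v * (S v - 0) * s v) a u + RInt (fun v => ks v * (S v - S b) * s v) u b.
Proof.
  intros Hb Hu.
  assert (E1 := RInt_by_parts_primitive 0 a u Ha Hu).
  assert (E2 := RInt_by_parts_primitive (S b) u b Hu Hb).
  rewrite RInt_Rplus in E1, E2 by (apply Ex; auto; intros; Rcontinuity; auto using continuous_k).
  rewrite <- (RInt_RChasles (fun v => k v * s v) a u b)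
    by (apply Ex; auto; intros; Rcontinuity; auto using continuous_k).
  rewrite primitive_base in E1. R_eq. nra.
Qed.

Lemma mean_deviation_sqr_le b u : lo < b < hi -> a <= u <= b ->
  (S b * k u - RInt (fun v => k v * s v) a b) ^ 2 <=
    RInt (fun v => ks v ^ 2 * s v) a b * S b ^ 3 / 3.
Proof.
  intros Hb Hu. assert (Hu' : lo < u < hi) by lra.
  assert (Su := primitive_bounds b u Hb Hu).
  rewrite (mean_deviation_by_parts b u Hb Hu').
  rewrite <- (RInt_RChasles (fun v => ks v ^ 2 * s v) a u b)
    by (apply Ex; auto; intros; Rcontinuity; auto).
  set (L := S b) in *. set (Ia := RInt (fun v => ks v ^ 2 * s v) a u).
  set (Ib := RInt (fun v => ks v ^ 2 * s v) u b).
  assert (HA : RInt (fun v => ks v * (S v - 0) * s v) a u ^ 2 <= Ia * (S u ^ 3 / 3)).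
  { replace (S u ^ 3 / 3) with (((S u - 0) ^ 3 - (S a - 0) ^ 3) / 3)
      by (rewrite primitive_base; field).
    apply RInt_primitive_cauchy_schwarz; auto; lra. }
  assert (HB : RInt (fun v => ks v * (S v - L) * s v) u b ^ 2 <= Ib * ((L - S u) ^ 3 / 3)).
  { replace ((L - S u) ^ 3 / 3) with (((S b - L) ^ 3 - (S u - L) ^ 3) / 3) by (unfold L; field).
    apply RInt_primitive_cauchy_schwarz; auto; lra. }
  assert (Nonneg : forall p q, lo < p < hi -> lo < q < hi -> p <= q ->
    0 <= RInt (fun v => ks v ^ 2 * s v) p q).
  { intros p q Hp Hq Hpq. apply RInt_ge_0; [lra | apply Ex; auto; intros; Rcontinuity; auto |].
    intros z Hz. apply Rmult_le_pos; [apply pow2_ge_0 | apply Snn; lra]. }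
  assert (Ca : 0 <= S u ^ 3 / 3) by (apply Rmult_le_pos; [apply pow_le|]; lra).
  assert (Cb : 0 <= (L - S u) ^ 3 / 3) by (apply Rmult_le_pos; [apply pow_le|]; lra).
  assert (H := sqr_add_le_mul_add _ _ Ia Ib _ _ (Nonneg a u Ha Hu' ltac:(lra))
                 (Nonneg u b Hu' Hb ltac:(lra)) Ca Cb HA HB).
  assert (Cubes : S u ^ 3 / 3 + (L - S u) ^ 3 / 3 <= L ^ 3 / 3).
  { assert (0 <= S u * L * (L - S u)) by (apply Rmult_le_pos; [apply Rmult_le_pos|]; lra).
    assert (L ^ 3 - S u ^ 3 - (L - S u) ^ 3 = 3 * (S u * L * (L - S u))) by ring.
    lra. }
  assert ((Ia + Ib) * (S u ^ 3 / 3 + (L - S u) ^ 3 / 3) <= (Ia + Ib) * (L ^ 3 / 3))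
    by (apply Rmult_le_compat_l; [apply Rplus_le_le_0_compat; apply Nonneg|]; lra).
  lra.
Qed.
End PointwiseBound.

(** * Functions of two variables *)

Lemma continuity_2d_pt_of_continuous (g : R -> R -> R) u t :
  continuous (fun p : R * R => g (fst p) (snd p)) (u, t) ->
  continuity_2d_pt (fun t' u' => g u' t') t u.
Proof.
  intros H eps.
  destruct (H (fun v => Rabs (v - g u t) < eps)) as [d Hd]; [now exists eps|].
  exists d. intros t' u' H1 H2. apply (Hd (u', t')). now split.
Qed.

Lemma continuous_of_continuity_2d_pt (f : R -> R -> R) t u :
  continuity_2d_pt f t u -> continuous (fun u' => f t u') u.
Proof.
  intros H. apply continuity_2d_pt_filterlim in H. intros P HP.
  destruct (H P HP) as [d Hd]. exists d. intros v Hv. apply (Hd (t, v)).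
  split; [apply ball_center | exact Hv].
Qed.

Lemma locally_2d_open_rectangle a b c d t u : c < t < d -> a < u < b ->
  locally_2d (fun t' u' => c < t' < d /\ a < u' < b) t u.
Proof.
  intros Ht Hu.
  destruct (locally_open_interval c d t Ht) as [e1 H1].
  destruct (locally_open_interval a b u Hu) as [e2 H2].
  assert (He : 0 < Rmin e1 e2) by (apply Rmin_glb_lt; apply cond_pos).
  exists (mkposreal _ He). simpl. intros t' u' Ht' Hu'. split.
  - apply H1. change (Rabs (t' - t) < e1). eapply Rlt_le_trans; [exact Ht' | apply Rmin_l].
  - apply H2. change (Rabs (u' - u) < e2). eapply Rlt_le_trans; [exact Hu' | apply Rmin_r].
Qed.

Lemma continuity_pt_RInt_param (f : R -> R -> R) a b t : a < b ->
  (forall u, a <= u <= b -> continuity_2d_pt (fun t' u' => f u' t') t u) ->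
  locally t (fun t' => ex_RInt (fun u => f u t') a b) ->
  continuity_pt (fun t' => RInt (fun u => f u t') a b) t.
Proof.
  intros Hab C E. apply continuity_pt_filterlim, filterlim_locally. intros eps.
  assert (He : 0 < eps / (2 * (b - a))) by (apply Rdiv_lt_0_compat; [apply cond_pos | lra]).
  destruct (uniform_continuity_2d_1d' (fun t' u => f u t') a b t C (mkposreal _ He))
    as [delta Hd].
  apply (filter_imp (fun t' => ex_RInt (fun u => f u t') a b /\ Rabs (t' - t) < delta)).
  2: { apply filter_and; auto. now exists delta. }
  intros t' [Et' Ht']. apply Rabs_def2 in Ht'.
  change (Rabs (RInt (fun u => f u t') a b - RInt (fun u => f u t) a b) < eps).
  rewrite <- RInt_Rminus by (auto; apply (locally_singleton _ _ E)).
  apply Rle_lt_trans with ((b - a) * (eps / (2 * (b - a)))).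
  - apply abs_RInt_le_const; [lra | |].
    + apply (ex_RInt_minus (fun u => f u t') (fun u => f u t)); auto.
      apply (locally_singleton _ _ E).
    + intros u Hu. left. apply (Hd u t u t'); auto; try lra.
      rewrite Rminus_eq_0, Rabs_R0. apply cond_pos.
  - assert (0 < eps) by apply cond_pos.
    replace ((b - a) * (eps / (2 * (b - a)))) with (eps / 2) by (field; lra). lra.
Qed.

Section SmoothRectangle.
Variables (f : R -> R -> R) (a b c d : R).
Hypothesis Hf : smooth_on_rect f a b c d.

Lemma smooth_rect_slice t : c < t < d -> Cinf a b (fun u => f u t).
Proof. intros Ht. apply Cinf_of_ex_derive_n. intros m u Hu. now apply (Hf m 0%nat u t). Qed.

Lemma smooth_rect_is_derive_t n u t : a < u < b -> c < t < d ->
  is_derive (fun t' => pd n 0 f u t') t (pd n 1 f u t).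
Proof. intros Hu Ht. apply Derive_correct. exact (proj1 (proj2 (Hf n 1%nat u t Hu Ht))). Qed.

Lemma smooth_rect_continuity_2d n m u t : a < u < b -> c < t < d ->
  continuity_2d_pt (fun t' u' => pd n m f u' t') t u.
Proof.
  intros Hu Ht. apply (continuity_2d_pt_of_continuous (pd n m f)).
  exact (proj2 (proj2 (Hf n m u t Hu Ht))).
Qed.

Lemma smooth_rect_continuous_u n m u t : a < u < b -> c < t < d ->
  continuous (fun u' => pd n m f u' t) u.
Proof.
  intros Hu Ht. apply (continuous_of_continuity_2d_pt (fun t' u' => pd n m f u' t')).
  now apply smooth_rect_continuity_2d.
Qed.

(* Both sides are the t-derivative of f u' - f u = RInt (d_u f) u u', the right-hand side
   by differentiation under the integral sign. *)
Lemma smooth_rect_partial_t_difference u u' t : a < u < b -> a < u' < b -> c < t < d ->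
  pd 0 1 f u' t - pd 0 1 f u t = RInt (fun v => pd 1 1 f v t) u u'.
Proof.
  intros Hu Hu' Ht.
  assert (Hloc_t := locally_open_interval c d t Ht).
  assert (D1 : is_derive (fun t' => f u' t' - f u t') t (pd 0 1 f u' t - pd 0 1 f u t)).
  { apply (is_derive_minus (fun t' => f u' t') (fun t' => f u t'));
      now apply (smooth_rect_is_derive_t 0). }
  assert (D2 : is_derive (fun t' => RInt (fun v => pd 1 0 f v t') u u') t
                 (RInt (fun v => pd 1 1 f v t) u u')).
  { apply (is_derive_RInt_param (fun t' v => pd 1 0 f v t') u u' t).
    - apply (filter_imp (fun t' => c < t' < d)); auto. intros t' Ht' v Hv.
      eexists. apply (smooth_rect_is_derive_t 1); auto.
      now apply (open_interval_of_Rmin_Rmax a b u u').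
    - intros v Hv. apply (smooth_rect_continuity_2d 1 1); auto.
      now apply (open_interval_of_Rmin_Rmax a b u u').
    - apply (filter_imp (fun t' => c < t' < d)); auto. intros t' Ht'.
      apply (ex_RInt_of_continuous_on a b); auto. intros z Hz.
      now apply (smooth_rect_continuous_u 1 0). }
  assert (FTC : locally t (fun t' => RInt (fun v => pd 1 0 f v t') u u' = f u' t' - f u t')).
  { apply (filter_imp (fun t' => c < t' < d)); auto. intros t' Ht'.
    apply (RInt_of_is_derive_on a b (fun v => f v t')); auto; intros z Hz.
    - apply Derive_correct. exact (proj1 (Hf 1%nat 0%nat z t' Hz Ht')).
    - now apply (smooth_rect_continuous_u 1 0). }
  assert (D3 := is_derive_ext_loc _ _ _ _ FTC D2).
  exact (eq_trans (eq_sym (is_derive_unique _ _ _ D1)) (is_derive_unique _ _ _ D3)).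
Qed.

Lemma smooth_rect_mixed_partials u t : a < u < b -> c < t < d ->
  is_derive (fun u' => pd 0 1 f u' t) u (pd 1 1 f u t).
Proof.
  intros Hu Ht.
  apply is_derive_ext_loc with (fun u' => pd 0 1 f u t + RInt (fun v => pd 1 1 f v t) u u').
  - apply (filter_imp (fun u' => a < u' < b)); [|now apply locally_open_interval].
    intros u' Hu'. rewrite <- smooth_rect_partial_t_difference by auto. R_eq. ring.
  - replace (pd 1 1 f u t) with (0 + pd 1 1 f u t) by ring.
    apply (is_derive_Rplus (fun _ => pd 0 1 f u t)); [apply is_derive_Rconst|].
    apply (is_derive_RInt (fun v => pd 1 1 f v t) (RInt (fun v => pd 1 1 f v t) u) u u).
    + apply (filter_imp (fun u' => a < u' < b)); [|now apply locally_open_interval].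
      intros u' Hu'. apply (RInt_correct (V := R_CompleteNormedModule)).
      apply (ex_RInt_of_continuous_on a b); auto. intros z Hz.
      now apply (smooth_rect_continuous_u 1 1).
    + now apply (smooth_rect_continuous_u 1 1).
Qed.
End SmoothRectangle.

(** * A regular curve at a fixed time *)

Section FixedTime.
Variables (x y : R -> R -> R) (t lo hi : R).
Hypothesis Hx : Cinf lo hi (fun u => x u t).
Hypothesis Hy : Cinf lo hi (fun u => y u t).
Hypothesis Hspeed : forall u, lo < u < hi -> 0 < speed x y u t.

Lemma speed_Cinf : Cinf lo hi (fun u => speed x y u t).
Proof.
  change (Cinf lo hi (fun u => sqrt (Derive (fun u' => x u' t) u ^ 2
                                      + Derive (fun u' => y u' t) u ^ 2))).
  apply Cinf_sqrt.
  - apply Cinf_plus; apply Cinf_pow; now apply Cinf_Derive.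
  - intros u Hu. apply (sqrt_lt_0_alt 0). rewrite sqrt_0. now apply Hspeed.
Qed.

Lemma Ds_Cinf g : Cinf lo hi (fun u => g u t) -> Cinf lo hi (fun u => Ds x y g u t).
Proof.
  intros G. apply Cinf_div; [now apply Cinf_Derive | apply speed_Cinf |].
  intros u Hu. apply Rgt_not_eq, Hspeed, Hu.
Qed.

Lemma curv_Cinf : Cinf lo hi (fun u => curv x y u t).
Proof.
  apply Cinf_opp, Cinf_plus; apply Cinf_mult; repeat apply Ds_Cinf; auto.
  apply Cinf_opp. now apply Ds_Cinf.
Qed.

Lemma curv_s_Cinf : Cinf lo hi (fun u => curv_s x y u t).
Proof. apply Ds_Cinf, curv_Cinf. Qed.

Lemma curv_ss_Cinf : Cinf lo hi (fun u => curv_ss x y u t).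
Proof. apply Ds_Cinf, curv_s_Cinf. Qed.

Lemma is_derive_Ds g u : Cinf lo hi (fun u => g u t) -> lo < u < hi ->
  is_derive (fun u' => g u' t) u (Ds x y g u t * speed x y u t).
Proof.
  intros G Hu. assert (Hs := Hspeed u Hu).
  replace (Ds x y g u t * speed x y u t) with (Derive (fun u' => g u' t) u)
    by (unfold Ds; field; lra).
  now apply (Cinf_is_derive lo hi).
Qed.

Lemma curv_formula u : lo < u < hi ->
  curv x y u t = (pd 2 0 x u t * pd 1 0 y u t - pd 1 0 x u t * pd 2 0 y u t)
                 / speed x y u t ^ 3.
Proof.
  intros Hu. assert (Hs := Hspeed u Hu).
  assert (DDs : forall z : R -> R -> R, Cinf lo hi (fun u => z u t) ->
    Ds x y (Ds x y z) u t =
      (pd 2 0 z u t * speed x y u t - pd 1 0 z u t * Derive (fun u' => speed x y u' t) u)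
      / speed x y u t ^ 3).
  { intros z Z.
    change (Ds x y (Ds x y z) u t) with
      (Derive (fun u' => Derive (fun v => z v t) u' / speed x y u' t) u / speed x y u t).
    rewrite (is_derive_unique _ _ _
      (is_derive_div (Derive (fun v => z v t)) (fun v => speed x y v t) u _ _
        (Cinf_is_derive lo hi _ u (Cinf_Derive lo hi _ Z) Hu)
        (Cinf_is_derive lo hi _ u speed_Cinf Hu) (Rgt_not_eq _ _ Hs))).
    change (pd 2 0 z u t) with (Derive (Derive (fun v => z v t)) u).
    change (pd 1 0 z u t) with (Derive (fun v => z v t) u). field. lra. }
  unfold curv, nu1, nu2. rewrite !DDs by auto. unfold Ds.
  change (Derive (fun u' => x u' t) u) with (pd 1 0 x u t).
  change (Derive (fun u' => y u' t) u) with (pd 1 0 y u t). field. lra.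
Qed.

Hypothesis Hlo : lo < -1.
Hypothesis Hhi : 1 < hi.

Local Notation K2 := (arcint x y (fun u t => curv x y u t ^ 2) t).
Local Notation K4 := (arcint x y (fun u t => curv x y u t ^ 4) t).
Local Notation Ks2 := (arcint x y (fun u t => curv_s x y u t ^ 2) t).

Lemma ex_arcint g : Cinf lo hi (fun u => g u t) ->
  ex_RInt (fun u => g u t * speed x y u t) (-1) 1.
Proof. intros G. apply (Cinf_ex_RInt lo hi); try lra. apply Cinf_mult; auto; apply speed_Cinf. Qed.

Lemma arcint_nonneg g : Cinf lo hi (fun u => g u t) ->
  (forall u, -1 < u < 1 -> 0 <= g u t) -> 0 <= arcint x y g t.
Proof.
  intros G Hg. apply RInt_ge_0; [lra | now apply ex_arcint |].
  intros u Hu. apply Rmult_le_pos; auto. apply Rlt_le, Hspeed; lra.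
Qed.

Lemma len_pos : 0 < len x y t.
Proof.
  apply RInt_gt_0; [lra | intros; apply Hspeed; lra |].
  intros u Hu. apply (Cinf_continuous lo hi); [apply speed_Cinf | lra].
Qed.

Lemma winding_sqr_le : arcint x y (curv x y) t ^ 2 <= K2 * len x y t.
Proof.
  unfold arcint, len.
  rewrite (RInt_Rext (fun u => curv x y u t * speed x y u t)
                     (fun u => curv x y u t * 1 * speed x y u t)) by (intros; ring).
  rewrite (RInt_Rext (fun u => speed x y u t) (fun u => 1 ^ 2 * speed x y u t)) by (intros; ring).
  apply RInt_cauchy_schwarz; [lra | | | |]; intros u Hu.
  - apply (Cinf_continuous lo hi); [apply curv_Cinf | lra].
  - apply continuous_Rconst.
  - apply (Cinf_continuous lo hi); [apply speed_Cinf | lra].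
  - apply Rlt_le, Hspeed; lra.
Qed.

Lemma arcint_curv_ss_curv : curv_s x y (-1) t = 0 -> curv_s x y 1 t = 0 ->
  arcint x y (fun u t => curv_ss x y u t * curv x y u t) t = - Ks2.
Proof.
  intros B1 B2.
  assert (F : RInt (fun v => curv_ss x y v t * curv x y v t * speed x y v t
                             + curv_s x y v t ^ 2 * speed x y v t) (-1) 1
              = curv_s x y 1 t * curv x y 1 t - curv_s x y (-1) t * curv x y (-1) t).
  { apply (RInt_of_is_derive_on lo hi (fun v => curv_s x y v t * curv x y v t)); try lra.
    - intros z Hz.
      replace (curv_ss x y z t * curv x y z t * speed x y z t
               + curv_s x y z t ^ 2 * speed x y z t)
        with (curv_ss x y z t * speed x y z t * curv x y z t
              + curv_s x y z t * (curv_s x y z t * speed x y z t)) by ring.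
      apply (is_derive_Rmult (fun v => curv_s x y v t) (fun v => curv x y v t));
        apply is_derive_Ds; auto using curv_Cinf, curv_s_Cinf.
    - intros z Hz. apply (Cinf_continuous lo hi); auto.
      apply Cinf_plus; [apply Cinf_mult; [apply Cinf_mult|] | apply Cinf_mult];
        auto using Cinf_pow, curv_Cinf, curv_s_Cinf, curv_ss_Cinf, speed_Cinf. }
  rewrite B1, B2, RInt_Rplus in F.
  - unfold arcint. R_eq. lra.
  - apply (ex_arcint (fun u t => curv_ss x y u t * curv x y u t)).
    apply Cinf_mult; auto using curv_Cinf, curv_ss_Cinf.
  - apply (ex_arcint (fun u t => curv_s x y u t ^ 2)). apply Cinf_pow, curv_s_Cinf.
Qed.

Lemma curv_deviation_sqr_le u : -1 <= u <= 1 ->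
  (curv x y u t - kbar x y t) ^ 2 <= len x y t * Ks2 / 3.
Proof.
  intros Hu. assert (HL := len_pos).
  assert (P := mean_deviation_sqr_le (fun v => curv x y v t) (fun v => curv_s x y v t)
    (fun v => speed x y v t) lo hi (-1) ltac:(lra)
    (fun v Hv => Cinf_continuous lo hi _ v curv_s_Cinf Hv)
    (fun v Hv => Cinf_continuous lo hi _ v speed_Cinf Hv)
    (fun v Hv => is_derive_Ds _ v curv_Cinf Hv)
    (fun v Hv => Rlt_le _ _ (Hspeed v Hv)) 1 u ltac:(lra) Hu).
  change (RInt (fun v => speed x y v t) (-1) 1) with (len x y t) in P.
  change (RInt (fun v => curv x y v t * speed x y v t) (-1) 1)
    with (arcint x y (curv x y) t) in P.
  change (RInt (fun v => curv_s x y v t ^ 2 * speed x y v t) (-1) 1) with Ks2 in P.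
  unfold kbar.
  replace ((curv x y u t - arcint x y (curv x y) t / len x y t) ^ 2)
    with ((len x y t * curv x y u t - arcint x y (curv x y) t) ^ 2 / len x y t ^ 2)
    by (field; lra).
  apply (Rmult_le_reg_r (len x y t ^ 2)); [now apply pow_lt|].
  replace (len x y t * Ks2 / 3 * len x y t ^ 2) with (Ks2 * len x y t ^ 3 / 3) by field.
  replace ((len x y t * curv x y u t - arcint x y (curv x y) t) ^ 2 / len x y t ^ 2
           * len x y t ^ 2)
    with ((len x y t * curv x y u t - arcint x y (curv x y) t) ^ 2) by (field; lra).
  exact P.
Qed.

Lemma arcint_curv_s_sqr_nonneg : 0 <= Ks2.
Proof. apply arcint_nonneg; [apply Cinf_pow, curv_s_Cinf | intros; apply pow2_ge_0]. Qed.

Lemma arcint_curv4_le : K4 <= 2 * (len x y t * Ks2 / 3 + kbar x y t ^ 2) * K2.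
Proof.
  set (B := len x y t * Ks2 / 3 + kbar x y t ^ 2).
  assert (Hk : forall u, -1 <= u <= 1 -> curv x y u t ^ 2 <= 2 * B).
  { intros u Hu. assert (D := curv_deviation_sqr_le u Hu). unfold B.
    set (k := curv x y u t) in *. set (kb := kbar x y t) in *.
    assert (0 <= (k - 2 * kb) ^ 2) by apply pow2_ge_0.
    assert (2 * (k - kb) ^ 2 + 2 * kb ^ 2 - k ^ 2 = (k - 2 * kb) ^ 2) by ring.
    lra. }
  assert (Ek2 := ex_arcint (fun u t => curv x y u t ^ 2) (Cinf_pow lo hi _ 2 curv_Cinf)).
  unfold arcint.
  apply Rle_trans with (RInt (fun u => 2 * B * (curv x y u t ^ 2 * speed x y u t)) (-1) 1).
  - apply RInt_le; [lra | | |].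
    + apply (ex_arcint (fun u t => curv x y u t ^ 4)), Cinf_pow, curv_Cinf.
    + apply (ex_RInt_scal (fun u => curv x y u t ^ 2 * speed x y u t)); auto.
    + intros u Hu. assert (Hs := Hspeed u ltac:(lra)).
      replace (curv x y u t ^ 4 * speed x y u t)
        with (curv x y u t ^ 2 * (curv x y u t ^ 2 * speed x y u t)) by ring.
      apply Rmult_le_compat_r; [|apply Hk; lra].
      apply Rmult_le_pos; [apply pow2_ge_0 | lra].
  - right. now apply RInt_Rscal.
Qed.

Hypothesis Hwind : arcint x y (curv x y) t <> 0.

Lemma arcint_curv_sqr_pos : 0 < K2.
Proof.
  assert (H := winding_sqr_le). assert (HL := len_pos).
  assert (0 < arcint x y (curv x y) t ^ 2) by (apply pow2_gt_0; auto).
  destruct (Rle_or_lt K2 0) as [Hle|]; auto.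
  assert (K2 * len x y t <= 0) by (apply Rmult_le_0_r; lra). lra.
Qed.

Lemma arcint_normal_velocity_curv : curv_s x y (-1) t = 0 -> curv_s x y 1 t = 0 ->
  arcint x y (fun u t => (curv_ss x y u t + / 2 * curv x y u t ^ 3 - lam x y t * curv x y u t)
                         * curv x y u t) t = 0.
Proof.
  intros B1 B2. assert (HK2 := arcint_curv_sqr_pos).
  assert (Ek2 := ex_arcint (fun u t => curv x y u t ^ 2) (Cinf_pow lo hi _ 2 curv_Cinf)).
  assert (Ek4 := ex_arcint (fun u t => curv x y u t ^ 4) (Cinf_pow lo hi _ 4 curv_Cinf)).
  assert (Ekk := ex_arcint (fun u t => curv_ss x y u t * curv x y u t)
                   (Cinf_mult lo hi _ _ curv_ss_Cinf curv_Cinf)).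
  assert (IBP := arcint_curv_ss_curv B1 B2). unfold arcint in *.
  rewrite (RInt_Rext _ (fun u => (curv_ss x y u t * curv x y u t * speed x y u t
      + / 2 * (curv x y u t ^ 4 * speed x y u t))
      + (- lam x y t) * (curv x y u t ^ 2 * speed x y u t))) by (intros; ring).
  rewrite RInt_Rplus, RInt_Rplus, !RInt_Rscal, IBP; auto.
  - unfold lam, arcint. R_eq. field. lra.
  - apply (ex_RInt_scal (fun u => curv x y u t ^ 4 * speed x y u t)); auto.
  - apply (ex_RInt_plus (fun u => curv_ss x y u t * curv x y u t * speed x y u t)); auto.
    apply (ex_RInt_scal (fun u => curv x y u t ^ 4 * speed x y u t)); auto.
  - apply (ex_RInt_scal (fun u => curv x y u t ^ 2 * speed x y u t)); auto.
Qed.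

Lemma lam_ge : - (len x y t * Ks2) / arcint x y (curv x y) t ^ 2 <= lam x y t.
Proof.
  assert (HK2 := arcint_curv_sqr_pos). assert (HL := len_pos). assert (HW := winding_sqr_le).
  assert (Hth : 0 < arcint x y (curv x y) t ^ 2) by (apply pow2_gt_0; auto).
  assert (HS := arcint_curv_s_sqr_nonneg).
  assert (H4 : 0 <= K4).
  { apply arcint_nonneg; [apply Cinf_pow, curv_Cinf|].
    intros u _. replace (curv x y u t ^ 4) with ((curv x y u t ^ 2) ^ 2) by ring. apply pow2_ge_0. }
  unfold lam.
  set (L := len x y t) in *. set (S := Ks2) in *.
  set (W := arcint x y (curv x y) t ^ 2) in *. set (Q := K2) in *.
  apply Rle_trans with (- S / Q).
  - assert (S / Q <= L * S / W).
    { apply (Rmult_le_reg_r (Q * W)); [now apply Rmult_lt_0_compat|].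
      replace (S / Q * (Q * W)) with (S * W) by (field; lra).
      replace (L * S / W * (Q * W)) with (S * (Q * L)) by (field; lra).
      now apply Rmult_le_compat_l. }
    replace (- (L * S) / W) with (- (L * S / W)) by (field; lra).
    replace (- S / Q) with (- (S / Q)) by (field; lra). lra.
  - unfold Rdiv. apply Rmult_le_compat_r; [left; now apply Rinv_0_lt_compat | lra].
Qed.

Lemma lam_le : lam x y t <= len x y t * Ks2 / 3 + kbar x y t ^ 2.
Proof.
  assert (HK2 := arcint_curv_sqr_pos).
  assert (HS := arcint_curv_s_sqr_nonneg).
  assert (H4 := arcint_curv4_le).
  unfold lam. apply (Rmult_le_reg_r K2); auto.
  set (Q := K2) in *. set (S := Ks2) in *. set (F := K4) in *.
  set (B := len x y t * S / 3 + kbar x y t ^ 2) in *.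
  replace ((- S + / 2 * F) / Q * Q) with (- S + / 2 * F) by (field; lra).
  lra.
Qed.
End FixedTime.

(** * Conservation of length along the flow *)

Definition speed_dt (x y : R -> R -> R) (u t : R) : R :=
  (pd 1 0 x u t * pd 1 1 x u t + pd 1 0 y u t * pd 1 1 y u t) / speed x y u t.

Section Flow.
Variables (x y : R -> R -> R) (T eps : R).
Hypothesis Heps : 0 < eps.
Hypothesis Hx : smooth_on_rect x (-1 - eps) (1 + eps) (- eps) T.
Hypothesis Hy : smooth_on_rect y (-1 - eps) (1 + eps) (- eps) T.
Hypothesis Hpos : forall u t, -1 <= u <= 1 -> 0 <= t < T -> 0 < speed x y u t.

Lemma speed_continuity_2d u t : -1 - eps < u < 1 + eps -> - eps < t < T ->
  continuity_2d_pt (fun t' u' => speed x y u' t') t u.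
Proof.
  intros Hu Ht.
  assert (Cx := smooth_rect_continuity_2d x _ _ _ _ Hx 1 0 u t Hu Ht).
  assert (Cy := smooth_rect_continuity_2d y _ _ _ _ Hy 1 0 u t Hu Ht).
  apply (continuity_1d_2d_pt_comp sqrt (fun t' u' => pd 1 0 x u' t' ^ 2 + pd 1 0 y u' t' ^ 2)).
  - apply continuity_pt_sqrt. apply Rplus_le_le_0_compat; apply pow2_ge_0.
  - apply continuity_2d_pt_plus; simpl;
      apply continuity_2d_pt_mult; auto; apply continuity_2d_pt_mult; auto;
      apply continuity_2d_pt_const.
Qed.

Lemma continuous_speed_u u t : -1 - eps < u < 1 + eps -> - eps < t < T ->
  continuous (fun u' => speed x y u' t) u.
Proof.
  intros Hu Ht. apply (continuous_of_continuity_2d_pt (fun t' u' => speed x y u' t')).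
  now apply speed_continuity_2d.
Qed.

Lemma is_derive_speed_t u t : -1 - eps < u < 1 + eps -> - eps < t < T ->
  0 < speed x y u t -> is_derive (fun t' => speed x y u t') t (speed_dt x y u t).
Proof.
  intros Hu Ht Hs.
  assert (Dx := smooth_rect_is_derive_t x _ _ _ _ Hx 1 u t Hu Ht).
  assert (Dy := smooth_rect_is_derive_t y _ _ _ _ Hy 1 u t Hu Ht).
  assert (Hq : 0 < pd 1 0 x u t ^ 2 + pd 1 0 y u t ^ 2).
  { apply (sqrt_lt_0_alt 0). now rewrite sqrt_0. }
  assert (D := is_derive_sqrt _ _ _
    (is_derive_plus _ _ _ _ _ (is_derive_pow _ 2 _ _ Dx) (is_derive_pow _ 2 _ _ Dy)) Hq).
  assert (E : speed_dt x y u t =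
    (INR 2 * pd 1 1 x u t * pd 1 0 x u t ^ Nat.pred 2
     + INR 2 * pd 1 1 y u t * pd 1 0 y u t ^ Nat.pred 2)
    / (2 * sqrt (pd 1 0 x u t ^ 2 + pd 1 0 y u t ^ 2))).
  { unfold speed_dt. unfold speed in Hs |- *. simpl in *. field. lra. }
  rewrite E. exact D.
Qed.

Lemma speed_dt_continuity_2d u t : -1 - eps < u < 1 + eps -> - eps < t < T ->
  speed x y u t <> 0 -> continuity_2d_pt (fun t' u' => speed_dt x y u' t') t u.
Proof.
  intros Hu Ht Hs. apply continuity_2d_pt_mult.
  - apply continuity_2d_pt_plus; apply continuity_2d_pt_mult;
      first [ now apply (smooth_rect_continuity_2d x _ _ _ _ Hx)
            | now apply (smooth_rect_continuity_2d y _ _ _ _ Hy) ].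
  - apply continuity_2d_pt_inv; [now apply speed_continuity_2d | exact Hs].
Qed.

Lemma slice_regular t : 0 <= t < T -> exists lo hi, lo < -1 /\ 1 < hi /\
  Cinf lo hi (fun u => x u t) /\ Cinf lo hi (fun u => y u t) /\
  forall u, lo < u < hi -> 0 < speed x y u t.
Proof.
  intros Ht.
  destruct (locally_pos_of_continuous _ (-1) (continuous_speed_u (-1) t ltac:(lra) ltac:(lra))
    (Hpos (-1) t ltac:(lra) Ht)) as [d1 H1].
  destruct (locally_pos_of_continuous _ 1 (continuous_speed_u 1 t ltac:(lra) ltac:(lra))
    (Hpos 1 t ltac:(lra) Ht)) as [d2 H2].
  set (r := Rmin eps (Rmin d1 d2)).
  assert (r <= eps) by apply Rmin_l.
  assert (r <= d1) by (eapply Rle_trans; [apply Rmin_r | apply Rmin_l]).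
  assert (r <= d2) by (eapply Rle_trans; [apply Rmin_r | apply Rmin_r]).
  assert (0 < r) by (repeat apply Rmin_glb_lt; auto; apply cond_pos).
  exists (-1 - r), (1 + r). repeat split; try lra.
  - apply (Cinf_restrict (-1 - eps) (1 + eps)); try lra.
    apply (smooth_rect_slice x _ _ _ _ Hx); lra.
  - apply (Cinf_restrict (-1 - eps) (1 + eps)); try lra.
    apply (smooth_rect_slice y _ _ _ _ Hy); lra.
  - intros u Hu. destruct (Rlt_le_dec u (-1)) as [Hl|Hl].
    + apply H1. change (Rabs (u - -1) < d1). rewrite Rabs_left; lra.
    + destruct (Rle_lt_dec u 1) as [Hr|Hr]; [apply Hpos; lra|].
      apply H2. change (Rabs (u - 1) < d2). rewrite Rabs_right; lra.
Qed.

Lemma is_derive_len t : 0 < t < T ->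
  is_derive (len x y) t (RInt (fun u => speed_dt x y u t) (-1) 1).
Proof.
  intros Ht.
  assert (Loc : locally t (fun t' => 0 < t' < T)) by now apply locally_open_interval.
  assert (In : forall u, Rmin (-1) 1 <= u <= Rmax (-1) 1 -> -1 <= u <= 1)
    by (intros u; now rewrite Rmin_left, Rmax_right by lra).
  replace (RInt (fun u => speed_dt x y u t) (-1) 1)
    with (RInt (fun u => Derive (fun t' => speed x y u t') t) (-1) 1).
  - apply (is_derive_RInt_param (fun t' u => speed x y u t') (-1) 1 t).
    + apply (filter_imp (fun t' => 0 < t' < T)); auto. intros t' Ht' u Hu. apply In in Hu.
      eexists. apply is_derive_speed_t; try lra. apply Hpos; lra.
    + intros u Hu. apply In in Hu. assert (Hs := Hpos u t Hu ltac:(lra)).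
      apply continuity_2d_pt_ext_loc with (fun t' u' => speed_dt x y u' t').
      * apply locally_2d_impl with (2 := locally_2d_and _ _ _ _
          (locally_2d_open_rectangle (-1 - eps) (1 + eps) (- eps) T t u ltac:(lra) ltac:(lra))
          (continuity_2d_pt_neq_0 _ _ _ (speed_continuity_2d u t ltac:(lra) ltac:(lra))
             (Rgt_not_eq _ _ Hs))).
        apply locally_2d_forall. intros t' u' [[H1 H2] H3]. symmetry.
        apply is_derive_unique, is_derive_speed_t; auto.
        assert (0 <= speed x y u' t') by apply sqrt_pos. lra.
      * apply speed_dt_continuity_2d; lra.
    + apply (filter_imp (fun t' => 0 < t' < T)); auto. intros t' Ht'.
      apply ex_RInt_of_continuous. intros u Hu. apply In in Hu.
      apply continuous_speed_u; lra.
  - apply RInt_Rext. intros u Hu. rewrite Rmin_left, Rmax_right in Hu by lra.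
    apply is_derive_unique, is_derive_speed_t; try lra. apply Hpos; lra.
Qed.

Lemma continuity_pt_len t : 0 <= t < T -> continuity_pt (len x y) t.
Proof.
  intros Ht. apply (continuity_pt_RInt_param (speed x y)); try lra.
  - intros u Hu. apply speed_continuity_2d; lra.
  - apply (filter_imp (fun t' => - eps < t' < T)); [|apply locally_open_interval; lra].
    intros t' Ht'. apply (ex_RInt_of_continuous_on (-1 - eps) (1 + eps)); try lra.
    intros u Hu. now apply continuous_speed_u.
Qed.

Hypothesis Hflow : forall u t, -1 <= u <= 1 -> 0 <= t < T ->
  let V := curv_ss x y u t + / 2 * curv x y u t ^ 3 - lam x y t * curv x y u t in
  pd 0 1 x u t = V * nu1 x y u t /\ pd 0 1 y u t = V * nu2 x y u t.

Lemma flow_velocity_orthogonal u t : -1 <= u <= 1 -> 0 <= t < T ->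
  pd 1 0 x u t * pd 0 1 x u t + pd 1 0 y u t * pd 0 1 y u t = 0.
Proof.
  intros Hu Ht. assert (Hs := Hpos u t Hu Ht).
  destruct (Hflow u t Hu Ht) as [Ex Ey]. rewrite Ex, Ey.
  unfold nu1, nu2, Ds. change (Derive (fun u' => x u' t) u) with (pd 1 0 x u t).
  change (Derive (fun u' => y u' t) u) with (pd 1 0 y u t). field. lra.
Qed.

(* Differentiating [<alpha_u, alpha_t> = 0] in [u] turns [<alpha_u, alpha_ut>] into
   [- <alpha_uu, alpha_t>], which is [V k |alpha_u|^2] by the curvature formula. *)
Lemma speed_dt_flow u t : -1 < u < 1 -> 0 <= t < T ->
  speed_dt x y u t =
    (curv_ss x y u t + / 2 * curv x y u t ^ 3 - lam x y t * curv x y u t)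
    * curv x y u t * speed x y u t.
Proof.
  intros Hu Ht.
  destruct (slice_regular t Ht) as (lo & hi & Hlo & Hhi & Cx & Cy & Hs).
  assert (Hu' : lo < u < hi) by lra.
  assert (Hrect : -1 - eps < u < 1 + eps /\ - eps < t < T) by lra.
  assert (Dx : is_derive (fun u' => pd 1 0 x u' t) u (pd 2 0 x u t))
    by exact (Cinf_is_derive lo hi _ u (Cinf_Derive lo hi _ Cx) Hu').
  assert (Dy : is_derive (fun u' => pd 1 0 y u' t) u (pd 2 0 y u t))
    by exact (Cinf_is_derive lo hi _ u (Cinf_Derive lo hi _ Cy) Hu').
  assert (Mx := smooth_rect_mixed_partials x _ _ _ _ Hx u t (proj1 Hrect) (proj2 Hrect)).
  assert (My := smooth_rect_mixed_partials y _ _ _ _ Hy u t (proj1 Hrect) (proj2 Hrect)).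
  assert (Zero : is_derive
    (fun u' => pd 1 0 x u' t * pd 0 1 x u' t + pd 1 0 y u' t * pd 0 1 y u' t) u 0).
  { apply is_derive_ext_loc with (fun _ => 0); [|apply is_derive_Rconst].
    apply (filter_imp (fun u' => -1 < u' < 1)); [|now apply locally_open_interval].
    intros u' Hu''. symmetry. apply flow_velocity_orthogonal; lra. }
  assert (Sum := eq_trans (eq_sym (is_derive_unique _ _ _
    (is_derive_Rplus _ _ _ _ _ (is_derive_Rmult _ _ _ _ _ Dx Mx)
                               (is_derive_Rmult _ _ _ _ _ Dy My))))
    (is_derive_unique _ _ _ Zero)).
  assert (Hsu := Hs u Hu').
  destruct (Hflow u t ltac:(lra) Ht) as [Ex Ey]. cbv beta in Sum. rewrite Ex, Ey in Sum.
  unfold nu1, nu2, Ds in Sum.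
  change (Derive (fun u' => x u' t) u) with (pd 1 0 x u t) in Sum.
  change (Derive (fun u' => y u' t) u) with (pd 1 0 y u t) in Sum.
  set (V := curv_ss x y u t + / 2 * curv x y u t ^ 3 - lam x y t * curv x y u t) in *.
  unfold speed_dt. rewrite (curv_formula x y t lo hi Cx Cy Hs u Hu').
  assert (Hpq : pd 1 0 x u t * pd 1 1 x u t + pd 1 0 y u t * pd 1 1 y u t =
    - (pd 2 0 x u t * (V * - (pd 1 0 y u t / speed x y u t))
       + pd 2 0 y u t * (V * (pd 1 0 x u t / speed x y u t)))) by lra.
  rewrite Hpq. field. lra.
Qed.

Hypothesis Hbc : forall t, 0 <= t < T -> curv_s x y (-1) t = 0 /\ curv_s x y 1 t = 0.
Hypothesis Hwind : forall t, 0 <= t < T -> arcint x y (curv x y) t <> 0.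

Lemma len_const t : 0 <= t < T -> len x y t = len x y 0.
Proof.
  intros Ht.
  assert (Zero : forall c, 0 <= c < T -> RInt (fun u => speed_dt x y u c) (-1) 1 = 0).
  { intros c Hc. destruct (slice_regular c Hc) as (lo & hi & Hlo & Hhi & Cx & Cy & Hs).
    destruct (Hbc c Hc) as [B1 B2].
    rewrite <- (arcint_normal_velocity_curv x y c lo hi Cx Cy Hs Hlo Hhi (Hwind c Hc) B1 B2).
    apply RInt_Rext. intros u Hu. rewrite Rmin_left, Rmax_right in Hu by lra.
    now apply speed_dt_flow. }
  destruct (MVT_gen (len x y) 0 t (fun c => RInt (fun u => speed_dt x y u c) (-1) 1))
    as [c [Hc E]].
  - intros c Hc. rewrite Rmin_left, Rmax_right in Hc by lra. apply is_derive_len; lra.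
  - intros c Hc. rewrite Rmin_left, Rmax_right in Hc by lra. apply continuity_pt_len; lra.
  - rewrite Rmin_left, Rmax_right in Hc by lra. rewrite Zero in E by lra. lra.
Qed.
End Flow.

Lemma div3_le_2_div_PI z : 0 <= z -> z / 3 <= 2 / PI * z.
Proof.
  intros Hz. assert (Hpi := PI_RGT_0). assert (Hpi4 := PI_4).
  assert (Third : / 3 <= 2 / PI).
  { apply (Rmult_le_reg_r (3 * PI)); [lra|].
    replace (/ 3 * (3 * PI)) with PI by field.
    replace (2 / PI * (3 * PI)) with 6 by (field; lra). lra. }
  unfold Rdiv at 1. rewrite Rmult_comm. now apply Rmult_le_compat_r.
Qed.

Theorem mainTheorem5 (th1 th2 T : R) (x y : R -> R -> R) :
  0 <= th2 -> th2 < th1 -> th1 < 2 * PI -> 0 < T ->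
  elastic_flow_solution th1 th2 T x y ->
  forall t, 0 <= t < T ->
    - (len x y 0 * arcint x y (fun u t => curv_s x y u t ^ 2) t)
      / (2 * PI * ((th1 - th2) / (2 * PI))) ^ 2 <= lam x y t /\
    lam x y t <= 2 * len x y 0 / PI * arcint x y (fun u t => curv_s x y u t ^ 2) t
                 + kbar x y t ^ 2.
Proof.
  intros Hth2 Hth Hth1 HT Hsol t Ht.
  destruct Hsol as [[eps [Heps [Hx Hy]]] [Hpos [Hflow [Hbc Hwind]]]].
  assert (Hw : forall c, 0 <= c < T -> arcint x y (curv x y) c <> 0)
    by (intros c Hc; rewrite Hwind; lra).
  assert (Hks : forall c, 0 <= c < T -> curv_s x y (-1) c = 0 /\ curv_s x y 1 c = 0)
    by (intros c Hc; destruct (Hbc c Hc) as (_ & _ & _ & _ & _ & ? & ?); auto).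
  assert (HL := len_const x y T eps Heps Hx Hy Hpos Hflow Hks Hw t Ht).
  destruct (slice_regular x y T eps Heps Hx Hy Hpos t Ht)
    as (lo & hi & Hlo & Hhi & Cx & Cy & Hs).
  assert (Low := lam_ge x y t lo hi Cx Cy Hs Hlo Hhi (Hw t Ht)).
  assert (Up := lam_le x y t lo hi Cx Cy Hs Hlo Hhi (Hw t Ht)).
  assert (Ks2 := arcint_curv_s_sqr_nonneg x y t lo hi Cx Cy Hs Hlo Hhi).
  assert (L0 := len_pos x y t lo hi Cx Cy Hs Hlo Hhi).
  rewrite HL, (Hwind t Ht) in Low. rewrite HL in Up, L0.
  split.
  - replace (2 * PI * ((th1 - th2) / (2 * PI))) with (th1 - th2)
      by (assert (Hpi := PI_RGT_0); field; lra).
    exact Low.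
  - assert (Third := div3_le_2_div_PI _ (Rmult_le_pos _ _ (Rlt_le _ _ L0) Ks2)). lra.
Qed.
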